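(* Assume the no-anticipation, common-support and transition-independence conditions stated in the context. Then for every $t=T_0+1,\dots,T$, \[ \boldsymbol\mu^{\mathrm{ATT}}_t=\mathbb{E}\Big[\mathbf X_t-\mathbb{E}\big[\mathbf X_t\mid \mathbf X_1^{T_0},D=0\big]\;\Big|\;D=1\Big]. \]
   Context: Fix integers $T_0\ge1$, $T_1\ge1$, $T=T_0+T_1$, $K\ge2$, and a set of $K$ outcome categories $\mathcal Y=\{\bar y^{(1)},\dots,\bar y^{(K)}\}$. On a probability space, a unit has a binary treatment indicator $D\in\{0,1\}$ (treated units, $D=1$, are untreated in periods $1,\dots,T_0$ and treated in all periods $T_0+1,\dots,T$; control units are never treated) and potential outcomes $Y_t(0),Y_t(1)\in\mathcal Y$, $t=1,\dots,T$. For $d\in\{0,1\}$ let $\mathbf X_t(d)=(\mathbf 1(Y_t(d)=\bar y^{(1)}),\dots,\mathbf 1(Y_t(d)=\bar y^{(K)}))^\top\in\mathcal X:=\{x\in\{0,1\}^K:\sum_{k=1}^K x^{(k)}=1\}$. The observed outcome vectors are $\mathbf X_t=\mathbf X_t(0)$ for $1\le t\le T_0$ and $\mathbf X_t=D\mathbf X_t(1)+(1-D)\mathbf X_t(0)$ for $t\ge T_0+1$. Write $\mathbf X_1^{T_0}=(\mathbf X_1,\dots,\mathbf X_{T_0})$ and $\mathbf X_1^{T_0}(0)=(\mathbf X_1(0),\dots,\mathbf X_{T_0}(0))$. The average treatment effect on the treated is $\boldsymbol\mu^{\mathrm{ATT}}_t=\mathbb{E}[\mathbf X_t(1)-\mathbf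 X_t(0)\mid D=1]$ for $t\ge T_0+1$. Conditional probabilities/expectations are taken only given events of positive probability. No anticipation: $\mathbf X_t(1)=\mathbf X_t(0)$ for all $t\in\{1,\dots,T_0\}$. Common support: there is $\epsilon>0$ such that for every $\mathbf x_1^{T_0}\in\mathcal X^{T_0}$ with $\Pr(\mathbf X_1^{T_0}=\mathbf x_1^{T_0})>0$, $\epsilon\le\Pr(D=1\mid\mathbf X_1^{T_0}=\mathbf x_1^{T_0})<1-\epsilon$. Transition independence: for every $t=T_0+1,\dots,T$, all $\mathbf x_t\in\mathcal X$ and all $\mathbf x_1^{T_0}\in\mathcal X^{T_0}$, $\Pr(\mathbf X_t(0)=\mathbf x_t\mid \mathbf X_1^{T_0}(0)=\mathbf x_1^{T_0},D=1)=\Pr(\mathbf X_t(0)=\mathbf x_t\mid \mathbf X_1^{T_0}(0)=\mathbf x_1^{T_0},D=0)$. *)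

From HB Require Import structures.
From mathcomp Require Import all_boot all_order all_algebra.
From mathcomp Require Import all_classical all_reals all_analysis.
Set Implicit Arguments. Unset Strict Implicit. Unset Printing Implicit Defensive.
Import Order.TTheory GRing.Theory Num.Theory.
Local Open Scope classical_set_scope.
Local Open Scope ring_scope.

Section Defs.
Context {R : realType} {d : measure_display} {Omega : measurableType d}.

Definition condP (P : probability Omega R) (A B : set Omega) : R :=
  fine (P (A `&` B)) / fine (P B).

Definition condE (P : probability Omega R) (A : set Omega) (f : Omega -> R) : R :=
  fine (\int[P]_(w in A) (f w)%:E)%E / fine (P A).

Definition in_calX (K : nat) (v : 'I_K -> R) : Prop :=
  (forall k, v k = 0 \/ v k = 1) /\ \sum_(k < K) v k = 1.

Definition onehot (K : nat) (y : 'I_K) : 'I_K -> R := fun k => (y == k)%:R.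

Definition Xobs (K T0 : nat) (Y0 Y1 : nat -> Omega -> 'I_K) (D : Omega -> bool)
  (t : nat) (w : Omega) : 'I_K -> R :=
  if (t <= T0)%N then onehot (Y0 t w)
  else (fun k => (D w)%:R * onehot (Y1 t w) k + (1 - (D w)%:R) * onehot (Y0 t w) k).

Definition pre_event (K T0 : nat) (Y0 Y1 : nat -> Omega -> 'I_K) (D : Omega -> bool)
  (xs : nat -> 'I_K -> R) : set Omega :=
  [set w | forall s, (1 <= s <= T0)%N -> Xobs T0 Y0 Y1 D s w = xs s].

Definition pre_event0 (K T0 : nat) (Y0 : nat -> Omega -> 'I_K)
  (xs : nat -> 'I_K -> R) : set Omega :=
  [set w | forall s, (1 <= s <= T0)%N -> onehot (Y0 s w) = xs s].

(* The random variable  w |-> E[X_t^(k) | X_1^{T0}, D = 0](w)  (elementary version,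
   the conditioning event being {X_1^{T0} = X_1^{T0}(w), D = 0}). *)
Definition condE_pre_D0 (K T0 : nat) (Y0 Y1 : nat -> Omega -> 'I_K) (D : Omega -> bool)
  (P : probability Omega R) (t : nat) (k : 'I_K) (w : Omega) : R :=
  condE P (pre_event T0 Y0 Y1 D (fun s => Xobs T0 Y0 Y1 D s w) `&` [set w' | D w' = false])
    (fun w' => Xobs T0 Y0 Y1 D t w' k).

End Defs.

From HB Require Import structures.
From mathcomp Require Import all_boot all_order all_algebra.
From mathcomp Require Import all_classical all_reals all_analysis.
Import Order.TTheory GRing.Theory Num.Theory.
Import numFieldNormedType.Exports.
Set Implicit Arguments. Unset Strict Implicit. Unset Printing Implicit Defensive.
Local Open Scope classical_set_scope.
Local Open Scope ring_scope.

(* On treated units X_t = X_t(1), so the claim reduces to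
   E[1{Y_t(0) = k}; D = 1] = E[m(history); D = 1], where m is the control-group
   conditional probability of {Y_t(0) = k} given the pre-treatment history.
   Both sides split over the finitely many history cells.  On a cell carrying
   treated mass, common support provides control mass, and transition
   independence identifies m with the treated conditional probability, so the
   two sides agree cell by cell. *)

Section conditioning_on_partitions.
Context {R : realType} {d : measure_display} {T : measurableType d}.
Variable P : probability T R.

Lemma sum_restrict_fibers (I : finType) (h : T -> I) (f : I -> T -> R) (x : T) :
  \sum_c (f c \_ (h @^-1` [set c])) x = f (h x) x.
Proof.
rewrite (bigD1 (h x)) //= big1 => [|c hxc]; first by rewrite patchE mem_set ?addr0.
by rewrite patchE memNset // => hxc'; rewrite hxc' eqxx in hxc.
Qed.

Lemma Rintegral_sum (I : finType) A (f : I -> T -> R) : measurable A ->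
  (forall i, P.-integrable A (EFin \o f i)) ->
  \int[P]_(x in A) \sum_i f i x = \sum_i \int[P]_(x in A) f i x.
Proof.
move=> mA fi; rewrite /Rintegral.
under eq_integral do rewrite -sumEFin.
rewrite integral_sum // sum_fine // => i _.
exact: integrable_fin_num (fi i).
Qed.

Section fibers.
Variables (I : finType) (h : T -> I).
Hypothesis mh : forall c, measurable (h @^-1` [set c]).

Lemma Rintegral_fibers A (f : T -> R) : measurable A ->
  P.-integrable A (EFin \o f) ->
  \int[P]_(x in A) f x = \sum_c \int[P]_(x in A `&` h @^-1` [set c]) f x.
Proof.
move=> mA fi.
rewrite -(eq_Rintegral _ (fun x _ => sum_restrict_fibers h (fun=> f) x)).
rewrite Rintegral_sum // => [|c]; first by apply: eq_bigr => c _; rewrite Rintegral_mkcondr.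
rewrite -restrict_EFin; apply/integrable_restrict => //.
by apply: integrableS fi => //; exact: measurableI.
Qed.

Lemma integrable_comp_fibers A (g : I -> R) : measurable A ->
  P.-integrable A (EFin \o (g \o h)).
Proof.
move=> mA.
apply: (eq_integrable mA (fun x => \sum_c (EFin \o (cst (g c) \_ (h @^-1` [set c]))) x)%E).
  by move=> x _; rewrite /= sumEFin sum_restrict_fibers.
apply: integrable_sum => // c _; rewrite -restrict_EFin; apply/integrable_restrict => //.
by apply: finite_measure_integrable_cst; exact: measurableI.
Qed.

End fibers.

Lemma integrable_indic_on A B : measurable A -> measurable B ->
  P.-integrable A (EFin \o \1_B).
Proof. by move=> mA mB; apply: (integrableS measurableT) => //; exact: integrable_indic. Qed.

Lemma Rintegral_indic A B : measurable A -> measurable B ->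
  \int[P]_(x in A) \1_B x = fine (P (B `&` A)).
Proof. by move=> mA mB; rewrite /Rintegral integral_indic. Qed.

Lemma condEE A f : condE P A f = \int[P]_(x in A) f x / fine (P A).
Proof. by []. Qed.

Lemma eq_condE A f g : {in A, f =1 g} -> condE P A f = condE P A g.
Proof. by move=> fg; rewrite !condEE (eq_Rintegral _ fg). Qed.

Lemma condE_indic A B : measurable A -> measurable B -> condE P A \1_B = condP P B A.
Proof. by move=> mA mB; rewrite condEE Rintegral_indic. Qed.

Lemma condPM A B : measurable B -> (0 < P B)%E ->
  condP P A B * fine (P B) = fine (P (A `&` B)).
Proof.
by move=> mB PB; rewrite /condP mulfVK // gt_eqF // fine_gt0 // PB ltey_eq fin_num_measure.
Qed.

Lemma condP_lt1_setD A B : measurable A -> measurable B -> (0 < P B)%E ->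
  condP P A B < 1 -> (0 < P (B `\` A))%E.
Proof.
move=> mA mB PB lt1; rewrite lt0e measure_ge0 andbT; apply/eqP => PBA.
have PB_eq : P B = P (B `&` A).
  (* [measureDI] coerces [P] to a bare measure; restore [P]'s coercion for [PBA] *)
  by rewrite (measureDI P mB mA) -[X in (X + _)%E]/(P (B `\` A)) PBA add0e.
move: PB lt1; rewrite /condP PB_eq setIC => PBA_gt0.
rewrite divff ?ltxx // gt_eqF // fine_gt0 // PBA_gt0 ltey_eq fin_num_measure //.
exact: measurableI.
Qed.

End conditioning_on_partitions.

Section onehot.
Variables (R : realType) (K : nat).

Lemma onehot_inj : injective (@onehot R K).
Proof.
move=> y y' /(congr1 (fun f => f y)); rewrite /onehot eqxx.
by case: eqP => // _ /eqP; rewrite oner_eq0.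
Qed.

Lemma onehot_calX (y : 'I_K) : in_calX (onehot (R:=R) y).
Proof.
split; first by move=> k; rewrite /onehot; case: (y == k); [right|left].
rewrite (bigD1 y) //= big1 ?addr0 /onehot ?eqxx // => i /negbTE.
by rewrite eq_sym => ->.
Qed.

Lemma onehot_indic (T : Type) (Y : T -> 'I_K) k w :
  onehot (R:=R) (Y w) k = \1_[set w | Y w = k] w.
Proof.
rewrite /onehot indicE; have [Yk|Ynk] := eqVneq (Y w) k; first by rewrite mem_set.
by rewrite memNset //; apply/eqP.
Qed.

End onehot.

Section pre_treatment_history.
Context {R : realType} {d : measure_display} {Omega : measurableType d}.
Variables (T0 K : nat) (D : Omega -> bool) (Y0 Y1 : nat -> Omega -> 'I_K).
Hypothesis mY0 : forall t (k : 'I_K), measurable [set w | Y0 t w = k].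

Definition history (w : Omega) : {ffun 'I_T0 -> 'I_K} := [ffun i : 'I_T0 => Y0 i.+1 w].

Local Notation cell c := (history @^-1` [set c]).
Local Notation treated := [set w | D w].
Local Notation control := [set w | D w = false].

Lemma history_eqP w w' :
  history w' = history w <-> forall s, (1 <= s <= T0)%N -> Y0 s w' = Y0 s w.
Proof.
split => [/ffunP eq_h s /andP[s_gt0 s_le]|eq_Y0]; last first.
  by apply/ffunP => i; rewrite !ffunE eq_Y0 //= ltn_ord.
have s_lt : (s.-1 < T0)%N by rewrite prednK.
by have := eq_h (Ordinal s_lt); rewrite !ffunE /= prednK.
Qed.

Lemma measurable_cell c : measurable (cell c).
Proof.
have -> : cell c = \bigcap_(i in [set: 'I_T0]) [set w | Y0 i.+1 w = c i].
  apply/seteqP; split => w /=; first by move=> <- i _; rewrite ffunE.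
  by move=> eq_c; apply/ffunP => i; rewrite ffunE; apply: eq_c.
by apply: fin_bigcap_measurable => //; exact: finite_finset.
Qed.

Lemma Xobs_pre s w : (s <= T0)%N -> Xobs T0 Y0 Y1 D s w = onehot (R:=R) (Y0 s w).
Proof. by move=> sT; rewrite /Xobs sT. Qed.

Lemma Xobs_treated t w k : (T0 < t)%N -> D w ->
  Xobs T0 Y0 Y1 D t w k = onehot (R:=R) (Y1 t w) k.
Proof. by move=> tT Dw; rewrite /Xobs leqNgt tT /= Dw subrr mul0r addr0 mul1r. Qed.

Lemma Xobs_control t w k : (T0 < t)%N -> D w = false ->
  Xobs T0 Y0 Y1 D t w k = onehot (R:=R) (Y0 t w) k.
Proof. by move=> tT Dw; rewrite /Xobs leqNgt tT /= Dw subr0 mul0r add0r mul1r. Qed.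

Lemma pre_event_cell (xs : nat -> 'I_K -> R) w :
  (forall s, (1 <= s <= T0)%N -> xs s = onehot (Y0 s w)) ->
  pre_event T0 Y0 Y1 D xs = cell (history w).
Proof.
move=> xsE; apply/seteqP; split => w' /=.
  move=> eq_xs; apply/history_eqP => s sT; apply: (@onehot_inj R).
  by rewrite -xsE // -eq_xs // Xobs_pre //; case/andP: sT.
move=> /history_eqP eq_Y0 s sT; rewrite Xobs_pre; last by case/andP: sT.
by rewrite eq_Y0 // xsE.
Qed.

Lemma pre_event0_cell (xs : nat -> 'I_K -> R) w :
  (forall s, (1 <= s <= T0)%N -> xs s = onehot (Y0 s w)) ->
  pre_event0 T0 Y0 xs = cell (history w).
Proof.
move=> xsE; apply/seteqP; split => w' /=.
  move=> eq_xs; apply/history_eqP => s sT; apply: (@onehot_inj R).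
  by rewrite -xsE // -eq_xs.
by move=> /history_eqP eq_Y0 s sT; rewrite eq_Y0 // xsE.
Qed.

Section conditioning_on_history.
Variable P : probability Omega R.
Hypothesis mD : measurable treated.
Variables (t : nat) (k : 'I_K).
Hypothesis t_post : (T0 < t)%N.

Local Notation B0 := [set w | Y0 t w = k].
Let mB0 : measurable B0 := mY0 t k.

Lemma measurable_control : measurable control.
Proof.
have -> : control = ~` treated by apply/seteqP; split => w /=; case: (D w).
exact: measurableC.
Qed.

Lemma condE_pre_D0_cell w :
  condE_pre_D0 T0 Y0 Y1 D P t k w = condP P B0 (cell (history w) `&` control).
Proof.
rewrite /condE_pre_D0 (pre_event_cell (w := w)) => [|s /andP[_ sT]]; last first.
  by rewrite Xobs_pre.
rewrite -condE_indic //; last exact: measurableI (measurable_cell _) measurable_control.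
by apply: eq_condE => w' /[!inE] -[_ Dw']; rewrite Xobs_control // onehot_indic.
Qed.

Lemma integrable_condE_pre_D0 :
  P.-integrable treated (EFin \o condE_pre_D0 T0 Y0 Y1 D P t k).
Proof.
apply: eq_integrable (integrable_comp_fibers P measurable_cell
  (fun c => condP P B0 (cell c `&` control)) mD) => // w _.
by rewrite /= condE_pre_D0_cell.
Qed.

Hypothesis overlap : forall xs : nat -> 'I_K -> R,
  (forall s, (1 <= s <= T0)%N -> in_calX (xs s)) ->
  (0 < P (pre_event T0 Y0 Y1 D xs))%E ->
  condP P treated (pre_event T0 Y0 Y1 D xs) < 1.

Hypothesis transition_independence : forall (x : 'I_K -> R) (xs : nat -> 'I_K -> R),
  in_calX x -> (forall s, (1 <= s <= T0)%N -> in_calX (xs s)) ->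
  (0 < P (pre_event0 T0 Y0 xs `&` [set w | D w = true]))%E ->
  (0 < P (pre_event0 T0 Y0 xs `&` control))%E ->
  condP P [set w | onehot (Y0 t w) = x] (pre_event0 T0 Y0 xs `&` [set w | D w = true])
  = condP P [set w | onehot (Y0 t w) = x] (pre_event0 T0 Y0 xs `&` control).

Lemma control_cell_gt0 w : (0 < P (treated `&` cell (history w)))%E ->
  (0 < P (cell (history w) `&` control))%E.
Proof.
move=> PTC_gt0; have xsE := fun s (_ : (1 <= s <= T0)%N) => erefl (onehot (R:=R) (Y0 s w)).
have PC_gt0 : (0 < P (pre_event T0 Y0 Y1 D (fun s => onehot (R:=R) (Y0 s w))))%E.
  by rewrite (pre_event_cell xsE); exact: lt_le_trans PTC_gt0 (measureIr P mD (measurable_cell _)).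
have -> : cell (history w) `&` control = cell (history w) `\` treated.
  by apply/seteqP; split => w' /= [Cw' Dw']; split => //; [rewrite Dw' | case: (D w') Dw'].
rewrite -(pre_event_cell xsE); apply: condP_lt1_setD => //.
  by rewrite (pre_event_cell xsE); exact: measurable_cell.
by apply: overlap => // s _; exact: onehot_calX.
Qed.

Lemma treated_cell_balance c :
  fine (P (B0 `&` (treated `&` cell c)))
  = condP P B0 (cell c `&` control) * fine (P (treated `&` cell c)).
Proof.
have mTC : measurable (treated `&` cell c) := measurableI _ _ mD (measurable_cell c).
have [PTC0|PTC_gt0] : P (treated `&` cell c) = 0%E \/ (0 < P (treated `&` cell c))%E.
  by rewrite lt0e measure_ge0 andbT; case: eqP; [left|right].
  by rewrite PTC0 (subset_measure0 _ mTC _ PTC0) ?mulr0 //; exact: measurableI.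
have [w [_ /= wc]] : treated `&` cell c !=set0.
  by apply/set0P; apply: contraTneq PTC_gt0 => ->; rewrite measure0 ltxx.
subst c; have xsE := fun s (_ : (1 <= s <= T0)%N) => erefl (onehot (R:=R) (Y0 s w)).
have B0E : [set w' | onehot (R:=R) (Y0 t w') = onehot k] = B0.
  by apply/seteqP; split => w' /=; [exact: onehot_inj | move=> ->].
have := transition_independence (onehot_calX R k) (fun s _ => onehot_calX R (Y0 s w)).
rewrite (pre_event0_cell xsE) B0E setIC => /(_ PTC_gt0 (control_cell_gt0 PTC_gt0)) <-.
by rewrite condPM // setIC.
Qed.

Lemma treated_counterfactual_identification :
  \int[P]_(w in treated) \1_B0 w = \int[P]_(w in treated) condE_pre_D0 T0 Y0 Y1 D P t k w.
Proof.
rewrite (Rintegral_fibers measurable_cell mD (integrable_indic_on P mD mB0)).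
rewrite (Rintegral_fibers measurable_cell mD integrable_condE_pre_D0).
apply: eq_bigr => c _; have mTC := measurableI _ _ mD (measurable_cell c).
rewrite Rintegral_indic // (eq_Rintegral P (g := fun=> condP P B0 (cell c `&` control))).
  by rewrite Rintegral_cst // treated_cell_balance.
by move=> w /[!inE] -[_ /= <-]; rewrite condE_pre_D0_cell.
Qed.

End conditioning_on_history.

End pre_treatment_history.

Theorem proposition1 (R : realType) (d : measure_display) (Omega : measurableType d)
  (P : probability Omega R) (T0 T1 K : nat)
  (D : Omega -> bool) (Y0 Y1 : nat -> Omega -> 'I_K) :
  (1 <= T0)%N -> (1 <= T1)%N -> (2 <= K)%N ->
  (* measurability of the treatment indicator and potential outcomes *)
  measurable [set w | D w] ->
  (forall t (k : 'I_K), measurable [set w | Y0 t w = k]) ->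
  (forall t (k : 'I_K), measurable [set w | Y1 t w = k]) ->
  (* no anticipation *)
  (forall t, (1 <= t <= T0)%N -> forall w, onehot (R:=R) (Y1 t w) = onehot (R:=R) (Y0 t w)) ->
  (* common support *)
  (exists eps : R, 0 < eps /\
     forall xs : nat -> 'I_K -> R,
       (forall s, (1 <= s <= T0)%N -> in_calX (xs s)) ->
       (0 < P (pre_event T0 Y0 Y1 D xs))%E ->
       eps <= condP P [set w | D w] (pre_event T0 Y0 Y1 D xs) < 1 - eps) ->
  (* transition independence *)
  (forall t, (T0 + 1 <= t <= T0 + T1)%N ->
     forall (x : 'I_K -> R) (xs : nat -> 'I_K -> R),
       in_calX x -> (forall s, (1 <= s <= T0)%N -> in_calX (xs s)) ->
       (0 < P (pre_event0 T0 Y0 xs `&` [set w | D w = true]))%E ->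
       (0 < P (pre_event0 T0 Y0 xs `&` [set w | D w = false]))%E ->
       condP P [set w | onehot (R:=R) (Y0 t w) = x] (pre_event0 T0 Y0 xs `&` [set w | D w = true])
       = condP P [set w | onehot (R:=R) (Y0 t w) = x] (pre_event0 T0 Y0 xs `&` [set w | D w = false])) ->
  forall t, (T0 + 1 <= t <= T0 + T1)%N -> forall k : 'I_K,
    condE P [set w | D w] (fun w => onehot (R:=R) (Y1 t w) k - onehot (R:=R) (Y0 t w) k)
    = condE P [set w | D w]
        (fun w => Xobs T0 Y0 Y1 D t w k - condE_pre_D0 T0 Y0 Y1 D P t k w).
Proof.
move=> _ _ _ mD mY0 mY1 _ [eps [eps_gt0 support]] TI t t_post k.
have t_gt : (T0 < t)%N by case/andP: t_post; rewrite addn1.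
have overlap (xs : nat -> 'I_K -> R) : (forall s, (1 <= s <= T0)%N -> in_calX (xs s)) ->
    (0 < P (pre_event T0 Y0 Y1 D xs))%E -> condP P [set w | D w] (pre_event T0 Y0 Y1 D xs) < 1.
  move=> xs_calX Ppos; case/andP: (support xs xs_calX Ppos) => _ /lt_le_trans; apply.
  by rewrite gerBl ltW.
have int_B0 := integrable_indic_on P mD (mY0 t k).
have int_B1 := integrable_indic_on P mD (mY1 t k).
have int_cf := integrable_condE_pre_D0 Y1 mY0 P mD k t_gt.
rewrite !condEE; congr (_ / _).
under eq_Rintegral do rewrite !onehot_indic.
under [RHS]eq_Rintegral => w /[!inE] Dw do rewrite Xobs_treated // onehot_indic.
rewrite (RintegralB mD int_B1 int_B0) (RintegralB mD int_B1 int_cf).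
by rewrite (treated_counterfactual_identification mY0 mD k t_gt overlap (TI t t_post)).
Qed.
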